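(* Let $f\in\mathcal{C}$ and $f^\ast(t):=tf(1/t)$, $t>0$, with $f^\ast(0):=\lim_{t\downarrow0}f^\ast(t)$. For all probability measures $P,Q$: (1) for $w\in(0,\frac12]$, $$D_f(P\|Q)\ge f^\ast\!\Bigl(1+\frac{\mathcal{I}_w(P\|Q)}{1-w}\Bigr)+f^\ast\!\Bigl(\frac{w-\mathcal{I}_w(P\|Q)}{1-w}\Bigr)-f^\ast\!\Bigl(\frac{w}{1-w}\Bigr);$$ (2) for $w\in(\frac12,1)$, $$D_f(P\|Q)\ge f^\ast\!\Bigl(1+\frac{\mathcal{I}_w(Q\|P)}{w}\Bigr)+f^\ast\!\Bigl(\frac{1-w-\mathcal{I}_w(Q\|P)}{w}\Bigr)-f^\ast\!\Bigl(\frac{1-w}{w}\Bigr).$$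
   Context: $\mathcal{C}$ is the set of convex $f\colon(0,\infty)\to\mathbb{R}$ with $f(1)=0$. For densities $p,q$ w.r.t. a dominating measure $\mu$, $D_f(P\|Q):=\int qf(p/q)\,\mathrm{d}\mu$ with conventions $f(0):=\lim_{t\downarrow0}f(t)$, $0f(0/0)=0$, $0f(a/0)=a\lim_{u\to\infty}f(u)/u$. DeGroot statistical information: $\mathcal{I}_\omega(P\|Q):=D_{\phi_\omega}(P\|Q)$ with $\phi_\omega(t)=\min\{\omega,1-\omega\}-\min\{\omega t,1-\omega\}$, $\omega\in(0,1)$. *)

From HB Require Import structures.
From mathcomp Require Import all_boot all_order all_algebra.
From mathcomp Require Import all_classical all_reals all_analysis.
Set Implicit Arguments. Unset Strict Implicit. Unset Printing Implicit Defensive.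
Import Order.TTheory GRing.Theory Num.Theory.
Import numFieldNormedType.Exports.
Local Open Scope classical_set_scope.
Local Open Scope ring_scope.

Section Defs.
Variable R : realType.

Definition convex_pos (f : R -> R) : Prop :=
  forall x y t : R, 0 < x -> 0 < y -> 0 <= t <= 1 ->
    f (t * x + (1 - t) * y) <= t * f x + (1 - t) * f y.

Definition in_C (f : R -> R) : Prop := convex_pos f /\ f 1 = 0.

Definition f_at0 (f : R -> R) : \bar R := lim ((f t)%:E @[t --> 0^'+]).

Definition f_slope_inf (f : R -> R) : \bar R :=
  lim ((f u / u)%:E @[u --> +oo]).

Definition fdiv_integrand (f : R -> R) (T : Type) (p q : T -> R) (x : T)
  : \bar R :=
  if 0 < q x then
    (if 0 < p x then (q x * f (p x / q x))%:E else ((q x)%:E * f_at0 f)%E)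
  else
    (if 0 < p x then ((p x)%:E * f_slope_inf f)%E else 0%E).

(* D_f(P||Q) computed from densities p, q w.r.t. mu *)
Definition fdiv (f : R -> R) d (T : measurableType d)
  (mu : {measure set T -> \bar R}) (p q : T -> R) : \bar R :=
  (\int[mu]_x fdiv_integrand f p q x)%E.

Definition phi (w : R) (t : R) : R :=
  Num.min w (1 - w) - Num.min (w * t) (1 - w).

Definition degroot d (T : measurableType d)
  (mu : {measure set T -> \bar R}) (p q : T -> R) (w : R) : \bar R :=
  fdiv (phi w) mu p q.

Definition fstar (f : R -> R) (t : R) : \bar R :=
  if 0 < t then (t * f (1 / t))%:E
  else lim ((s * f (1 / s))%:E @[s --> 0^'+]).

End Defs.

From HB Require Import structures.
From mathcomp Require Import all_boot all_order all_algebra.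
From mathcomp Require Import all_classical all_reals all_analysis.
From mathcomp Require Import lra ring.
Import Order.TTheory GRing.Theory Num.Theory.
Import numFieldNormedType.Exports.
Local Open Scope classical_set_scope.
Local Open Scope ring_scope.
Set Implicit Arguments. Unset Strict Implicit.

(* Write g := persp f, so that f^* = g on (0, oo) and D_f(P || Q) is the
   integral of p g(q/p) (with the boundary conventions).  Both DeGroot
   informations in the statement are affine functions of
   m := \int min(q, k p) in [0, 1], for k := w/(1-w), resp. (1-w)/w.  For
   convex g, the supporting lines of g at m and at 1 + k - m, glued at k, form
   a two-piece linear minorant l <= g, and the integral of p l(q/p) equals
   g m + g (1 + k - m) - g k.  When m = 0 the supporting line at m is replaced
   by affine minorants whose values at 0 approach f^*(0). *)

Section Convex.
Variable R : realType.
Implicit Types (f g : R -> R) (c s K M k m x y z t : R).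

Lemma convex_pos_chord f x y z : convex_pos f -> 0 < x -> x < y -> y < z ->
  (z - x) * f y <= (z - y) * f x + (y - x) * f z.
Proof.
move=> cf x0 xy yz.
have zx0 : 0 < z - x by lra.
set l := (z - y) / (z - x).
have l01 : 0 <= l <= 1.
  by apply/andP; split; [rewrite divr_ge0 //; lra | rewrite ler_pdivrMr //; lra].
have := cf x z l x0 (lt_trans x0 (lt_trans xy yz)) l01.
have -> : l * x + (1 - l) * z = y by rewrite /l; field; rewrite gt_eqF.
have e1 : (z - x) * l = z - y by rewrite /l; field; rewrite gt_eqF.
have e2 : (z - x) * (1 - l) = y - x by rewrite mulrBr mulr1 e1; ring.
clearbody l; move=> cvx; have := ler_wpM2l (ltW zx0) cvx.
by rewrite mulrDr !mulrA e1 e2.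
Qed.

Lemma convex_pos_slope_le f x y z : convex_pos f -> 0 < x -> x < y -> y < z ->
  (f y - f x) / (y - x) <= (f z - f y) / (z - y).
Proof.
move=> cf x0 xy yz; have := convex_pos_chord cf x0 xy yz.
by rewrite ler_pdivrMr ?subr_gt0 // mulrAC ler_pdivlMr ?subr_gt0 //; nra.
Qed.

Lemma convex_pos_subgradient f x : convex_pos f -> 0 < x ->
  exists s, forall y, 0 < y -> f x + s * (y - x) <= f y.
Proof.
move=> cf x0.
pose S := [set (f x - f y) / (x - y) | y in [set y | 0 < y < x]].
have S_le y z : 0 < y < x -> x < z -> (f x - f y) / (x - y) <= (f z - f x) / (z - x).
  by move=> /andP[y0 yx] xz; exact: convex_pos_slope_le.
have S0 : S !=set0.
  by exists ((f x - f (x / 2)) / (x - x / 2)); exists (x / 2) => //=; lra.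
have S_ub : ubound S ((f (x + 1) - f x) / (x + 1 - x)).
  by move=> _ [y y0 <-]; apply: S_le => //; lra.
exists (sup S) => y y0.
have [yx|xy] := ltP y x.
  have : (f x - f y) / (x - y) <= sup S.
    by apply: ub_le_sup; [exists ((f (x + 1) - f x) / (x + 1 - x)) | exists y => //=; lra].
  by rewrite ler_pdivrMr ?subr_gt0 //; nra.
have [->|xy'] := eqVneq y x; first by rewrite subrr mulr0 addr0.
have : sup S <= (f y - f x) / (y - x).
  by apply: ge_sup => // _ [z z0 <-]; apply: S_le => //; rewrite lt_neqAle eq_sym xy' xy.
rewrite ler_pdivlMr; last by rewrite subr_gt0 lt_neqAle eq_sym xy' xy.
by nra.
Qed.

Definition persp f t := t * f (1 / t).

Lemma fstar_gt0 f t : 0 < t -> fstar f t = (persp f t)%:E.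
Proof. by move=> t0; rewrite /fstar t0. Qed.

Lemma convex_pos_persp f : convex_pos f -> convex_pos (persp f).
Proof.
move=> cf x y t x0 y0 /andP[t0 t1]; rewrite /persp.
set s := t * x + (1 - t) * y.
have s0 : 0 < s by rewrite /s; nra.
(* convexity of f at 1/x and 1/y, with weights t x / s and (1 - t) y / s *)
set l := t * x / s.
have l01 : 0 <= l <= 1.
  apply/andP; split; first by apply: divr_ge0; [nra | exact: ltW].
  by rewrite ler_pdivrMr // mul1r /s; nra.
have := cf (1 / x) (1 / y) l (divr_gt0 ltr01 x0) (divr_gt0 ltr01 y0) l01.
have -> : l * (1 / x) + (1 - l) * (1 / y) = 1 / s.
  by rewrite /l /s; field; rewrite -/s !gt_eqF.
have e1 : s * l = t * x by rewrite /l; field; rewrite gt_eqF.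
have e2 : s * (1 - l) = (1 - t) * y by rewrite mulrBr mulr1 e1 /s; ring.
clearbody l; move=> cvx; have := ler_wpM2l (ltW s0) cvx.
by rewrite mulrDr !mulrA e1 e2.
Qed.

Lemma cvg_affine_at_right0 c K : (c + K * t)%:E @[t --> 0^'+] --> c%:E.
Proof.
apply/fine_cvgP; split; first by near=> t.
apply: cvg_at_right_filter.
have : (c + K * t) @[t --> (0:R)] --> c + K * 0.
  by apply: cvgD; [exact: cvg_cst | apply: cvgM; [exact: cvg_cst | exact: cvg_id]].
by rewrite mulr0 addr0.
Unshelve. all: by end_near. Qed.

Lemma lim_at_right0_ge_affine g c K : cvg ((g t)%:E @[t --> 0^'+]) ->
  (\forall t \near 0^'+, c + K * t <= g t) ->
  (c%:E <= lim ((g t)%:E @[t --> 0^'+]))%E.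
Proof.
move=> cg gK; rewrite -(cvg_lim _ (@cvg_affine_at_right0 c K)) //.
apply: lee_lim => //; apply/cvg_ex; eexists; exact: cvg_affine_at_right0.
Qed.

Lemma convex_pos_is_cvg_at_right0 f : convex_pos f -> cvg ((f t)%:E @[t --> 0^'+]).
Proof.
move=> cf.
(* removing the slope s of a chord right of 0 makes f nonincreasing near 0 *)
have [s sE] : exists s, s = (f 1 - f (1 / 2)) / (1 - 1 / 2) by eexists.
have f_sub_nonincr x y : 0 < x -> x <= y -> y < 1 / 2 -> f y - s * y <= f x - s * x.
  move=> x0 xy y2; have [->//|xy'] := eqVneq x y.
  have {}xy : x < y by rewrite lt_neqAle xy' xy.
  have slope_xy := convex_pos_slope_le cf x0 xy y2.
  have slope_y := @convex_pos_slope_le f y (1 / 2) 1 cf (lt_trans x0 xy) y2 ltac:(lra).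
  have := le_trans slope_xy slope_y; rewrite -sE ler_pdivrMr ?subr_gt0 // mulrBr.
  by lra.
have cvg_sub : cvg ((f t - s * t)%:E @[t --> 0^'+]).
  apply: nonincreasing_at_right_is_cvge; near=> b.
  move=> x y; rewrite !in_itv /= => /andP[x0 xb] /andP[y0 yb] xy.
  rewrite lee_fin; apply: f_sub_nonincr => //; apply: (lt_trans yb).
  by near: b; apply: nbhs_right_lt; lra.
have cvg_lin : (s * t)%:E @[t --> 0^'+] --> 0%:E.
  by have := @cvg_affine_at_right0 0 s; under eq_fun do rewrite add0r.
have := cvgeD (@fin_num_adde_defl _ _ 0%:E isT) cvg_sub cvg_lin.
under eq_fun do rewrite -EFinD subrK.
by move=> fl; apply/cvg_ex; eexists; exact: fl.
Unshelve. all: by end_near. Qed.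

Lemma inv_cvgy_at_right0 : (fun u : R => u^-1) @ +oo --> (0:R)^'+.
Proof.
move=> A /= /nbhs_ballP[e /= e0 eA].
suff : \forall u \near +oo, A u^-1 by [].
near=> u.
have u0 : 0 < u by near: u; apply: nbhs_pinfty_gt; rewrite num_real.
have ue : e^-1 < u by near: u; apply: nbhs_pinfty_gt; rewrite num_real.
apply: eA; last by rewrite invr_gt0.
rewrite /ball /= sub0r normrN gtr0_norm ?invr_gt0 //.
by rewrite -(invrK e) ltf_pV2 ?posrE ?invr_gt0.
Unshelve. all: by end_near. Qed.

Lemma convex_pos_f_slope_inf f : convex_pos f ->
  f_slope_inf f = lim ((persp f t)%:E @[t --> 0^'+]).
Proof.
move=> cf; apply: cvg_lim => //.
have persp_inv : (persp f u^-1)%:E @[u --> +oo] --> lim ((persp f t)%:E @[t --> 0^'+]).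
  exact: cvg_comp inv_cvgy_at_right0 (convex_pos_is_cvg_at_right0 (convex_pos_persp cf)).
apply: cvg_trans persp_inv; apply: near_eq_cvg; near=> u.
have u0 : 0 < u by near: u; apply: nbhs_pinfty_gt; rewrite num_real.
by rewrite /persp /= div1r invrK mulrC.
Unshelve. all: by end_near. Qed.

Lemma convex_pos_affine_minorant_at0 g M : convex_pos g ->
  (M%:E < lim ((g t)%:E @[t --> 0^'+]))%E ->
  exists s, forall r, 0 < r -> M + s * r <= g r.
Proof.
move=> cg Mlim.
have [e e0 Mg] : exists2 e, 0 < e & forall r, 0 < r -> r < e -> M < g r.
  have /nbhs_ballP[e /= e0 eM] := convex_pos_is_cvg_at_right0 cg (open_ereal_gt' Mlim).
  exists e => // r r0 re; rewrite -lte_fin; apply: eM => //.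
  by rewrite /ball /= sub0r normrN gtr0_norm.
(* on (0, e/2] g stays above M; beyond, use the chord slope at e/2, capped at 0 *)
set d := e / 2.
have d0 : 0 < d by rewrite /d; lra.
have de : d < e by rewrite /d; lra.
have [sd sdE] : exists sd, sd = (g d - g (d / 2)) / (d - d / 2) by eexists.
exists (Num.min sd 0) => r r0.
have sds : Num.min sd 0 <= sd by rewrite ge_min lexx.
have sd0 : Num.min sd 0 <= 0 by rewrite ge_min lexx orbT.
move: (Num.min sd 0) sds sd0 => s sds s0.
have [rd|dr] := leP r d; first by have := Mg r r0 (le_lt_trans rd de); nra.
have := @convex_pos_slope_le g (d / 2) d r cg ltac:(lra) ltac:(lra) dr.
rewrite -sdE ler_pdivlMr ?subr_gt0 // => slope_r.
have := Mg d d0 de.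
have : s * (r - d) <= sd * (r - d) by rewrite ler_wpM2r // subr_ge0 ltW.
by nra.
Qed.

Lemma two_piece_minorant g k m M (s1 s2 : R) : 0 < k ->
  (forall r, 0 < r -> M + s1 * (r - m) <= g r) ->
  (forall r, 0 < r -> g (1 + k - m) + s2 * (r - (1 + k - m)) <= g r) ->
  forall r, 0 < r ->
    M - s1 * m + g (1 + k - m) - g k - s2 * (1 - m)
      + s1 * Num.min r k + s2 * (r - Num.min r k) <= g r.
Proof.
move=> k0 g_m g_n r r0; have [rk|kr] := leP r k.
- by have := g_m r r0; have := g_n k k0; lra.
- by have := g_m k k0; have := g_n r r0; lra.
Qed.

Lemma lee_add_approx (a D : \bar R) c :
  (forall M, (M%:E < a)%E -> ((M + c)%:E <= D)%E) -> (a + c%:E <= D)%E.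
Proof.
case: a => [a| |] aD; last by rewrite leNye.
- case: D aD => [D| |] aD; last by have := aD (a - 1) ltac:(rewrite lte_fin; lra).
  + rewrite -EFinD lee_fin leNgt; apply/negP => DA.
    by have := aD (a - (a + c - D) / 2) ltac:(rewrite lte_fin; lra); rewrite lee_fin; lra.
  + by rewrite leey.
- case: D aD => [D| |] aD //; last by have := aD 0 (ltry _).
  by move: (aD (D - c + 1) (ltry _)); rewrite lee_fin => ?; exfalso; lra.
Qed.

End Convex.

Section Integrand.
Variable R : realType.
Variables (f : R -> R) (k C s1 s2 : R).
Hypotheses (cf : convex_pos f) (k0 : 0 < k).
Hypothesis persp_ge : forall r, 0 < r ->
  C + s1 * Num.min r k + s2 * (r - Num.min r k) <= persp f r.

Lemma f_at0_ge_of_minorant : (s2%:E <= f_at0 f)%E.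
Proof.
apply: (@lim_at_right0_ge_affine _ _ s2 (C + s1 * k - s2 * k)).
  exact: convex_pos_is_cvg_at_right0.
near=> t.
have t0 : 0 < t by near: t; exact: nbhs_right_gt.
have tk : t <= k^-1 by near: t; apply: nbhs_right_le; rewrite invr_gt0.
have kt : k <= t^-1 by rewrite -(invrK k) lef_pV2 ?posrE ?invr_gt0.
have := @persp_ge (t^-1) ltac:(by rewrite invr_gt0).
rewrite (min_r kt) /persp div1r invrK => persp_inv.
have -> : s2 + (C + s1 * k - s2 * k) * t = t * (C + s1 * k + s2 * (t^-1 - k)).
  by field; rewrite gt_eqF.
by have := ler_wpM2l (ltW t0) persp_inv; rewrite mulrA mulfV ?gt_eqF // mul1r.
Unshelve. all: by end_near. Qed.

Lemma f_slope_inf_ge_of_minorant : (C%:E <= f_slope_inf f)%E.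
Proof.
rewrite convex_pos_f_slope_inf //; apply: (@lim_at_right0_ge_affine _ _ C s1).
  exact/convex_pos_is_cvg_at_right0/convex_pos_persp.
near=> t.
have t0 : 0 < t by near: t; exact: nbhs_right_gt.
have tk : t <= k by near: t; exact: nbhs_right_le.
by have := persp_ge t0; rewrite (min_l tk) subrr mulr0 addr0.
Unshelve. all: by end_near. Qed.

Lemma fdiv_integrand_ge_minorant (T : Type) (p q : T -> R) x :
  0 <= p x -> 0 <= q x ->
  ((C * p x + s1 * Num.min (q x) (k * p x)
     + s2 * (q x - Num.min (q x) (k * p x)))%:E <= fdiv_integrand f p q x)%E.
Proof.
move=> p0 q0; rewrite /fdiv_integrand.
have [q_gt0|q_le0] := ltP 0 (q x); have [p_gt0|p_le0] := ltP 0 (p x).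
- (* homogeneity: q f (p / q) = p (persp f) (q / p) *)
  set r := q x / p x.
  have r0 : 0 < r by rewrite divr_gt0.
  have fE : q x * f (p x / q x) = p x * persp f r.
    by rewrite /persp /r div1r invf_div; field; rewrite gt_eqF.
  have qE : q x = p x * r by rewrite /r; field; rewrite gt_eqF.
  have minE : Num.min (q x) (k * p x) = p x * Num.min r k.
    by rewrite qE [k * _]mulrC minr_pMr // ltW.
  rewrite fE minE qE lee_fin.
  have -> : C * p x + s1 * (p x * Num.min r k) + s2 * (p x * r - p x * Num.min r k) =
      p x * (C + s1 * Num.min r k + s2 * (r - Num.min r k)) by ring.
  exact: (ler_wpM2l (ltW p_gt0) (persp_ge r0)).
- have {p_le0 p0}-> : p x = 0 by apply/eqP; rewrite eq_le p_le0 p0.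
  rewrite !mulr0 (min_r (ltW q_gt0)) mulr0 !add0r subr0 mulrC EFinM.
  by rewrite lee_wpmul2l ?lee_fin ?(ltW q_gt0) ?f_at0_ge_of_minorant.
- have {q_le0 q0}-> : q x = 0 by apply/eqP; rewrite eq_le q_le0 q0.
  rewrite (min_l (mulr_ge0 (ltW k0) p0)) mulr0 subr0 mulr0 !addr0 mulrC EFinM.
  by rewrite lee_wpmul2l ?lee_fin ?(ltW p_gt0) ?f_slope_inf_ge_of_minorant.
- have {p_le0 p0}-> : p x = 0 by apply/eqP; rewrite eq_le p_le0 p0.
  have {q_le0 q0}-> : q x = 0 by apply/eqP; rewrite eq_le q_le0 q0.
  by rewrite !mulr0 minxx subr0 !mulr0 !addr0.
Qed.

End Integrand.

Section DeGroot.
Variable R : realType.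
Implicit Types w : R.

Lemma phi_f_at0 w : 0 < w < 1 -> f_at0 (phi w) = (Num.min w (1 - w))%:E.
Proof.
move=> /andP[w0 w1]; apply: cvg_lim => //.
apply: cvg_trans (@cvg_affine_at_right0 R (Num.min w (1 - w)) (- w)).
apply: near_eq_cvg; near=> t.
have t0 : 0 < t by near: t; exact: nbhs_right_gt.
have tw : t < (1 - w) / w by near: t; apply: nbhs_right_lt; rewrite divr_gt0 //; lra.
have wt : w * t <= 1 - w by rewrite mulrC -ler_pdivlMr // ltW.
by rewrite /phi (min_l wt) mulNr.
Unshelve. all: by end_near. Qed.

Lemma phi_f_slope_inf w : 0 < w < 1 -> f_slope_inf (phi w) = 0%:E.
Proof.
move=> /andP[w0 w1]; apply: cvg_lim => //.
set c := Num.min w (1 - w) - (1 - w).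
apply: cvg_trans (cvg_comp _ _ (@inv_cvgy_at_right0 R) (@cvg_affine_at_right0 R 0 c)).
apply: near_eq_cvg; near=> u.
have u0 : 0 < u by near: u; apply: nbhs_pinfty_gt; rewrite num_real.
have uw : (1 - w) / w < u by near: u; apply: nbhs_pinfty_gt; rewrite num_real.
have wu : 1 - w <= w * u by rewrite mulrC -ler_pdivrMr // ltW.
by rewrite /phi /= (min_r wu) add0r /c mulrC.
Unshelve. all: by end_near. Qed.

Lemma fdiv_integrand_phi w (T : Type) (a b : T -> R) x : 0 < w < 1 ->
  0 <= a x -> 0 <= b x ->
  fdiv_integrand (phi w) a b x =
  (Num.min w (1 - w) * b x - Num.min (w * a x) ((1 - w) * b x))%:E.
Proof.
move=> w01 a0 b0; have /andP[w0 w1] := w01.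
rewrite /fdiv_integrand phi_f_at0 // phi_f_slope_inf //.
have [b_gt0|b_le0] := ltP 0 (b x); have [a_gt0|a_le0] := ltP 0 (a x).
- rewrite /phi mulrBr [b x * _]mulrC; congr (_ - _)%:E.
  have e : b x * (w * (a x / b x)) = w * a x by field; rewrite gt_eqF.
  by rewrite minr_pMr ?ltW // e [b x * _]mulrC.
- have {a_le0 a0}-> : a x = 0 by apply/eqP; rewrite eq_le a_le0 a0.
  have -> : Num.min (w * 0) ((1 - w) * b x) = 0 by rewrite mulr0 min_l // mulr_ge0 //; lra.
  by rewrite subr0 -EFinM mulrC.
- have {b_le0 b0}-> : b x = 0 by apply/eqP; rewrite eq_le b_le0 b0.
  have -> : Num.min (w * a x) ((1 - w) * 0) = 0 by rewrite mulr0 min_r // mulr_ge0 // ltW.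
  by rewrite mulr0 mule0 subr0.
- have {a_le0 a0}-> : a x = 0 by apply/eqP; rewrite eq_le a_le0 a0.
  have {b_le0 b0}-> : b x = 0 by apply/eqP; rewrite eq_le b_le0 b0.
  by rewrite !mulr0 minxx subr0.
Qed.

End DeGroot.

Section Density.
Variables (R : realType) (d : measure_display) (T : measurableType d)
  (mu : {measure set T -> \bar R}).

Lemma lee_integral (F G : T -> \bar R) : (forall x, (F x <= G x)%E) ->
  (\int[mu]_x F x <= \int[mu]_x G x)%E.
Proof.
move=> FG; rewrite (integralE _ _ F) (integralE _ _ G).
apply: leeB; rewrite !ge0_integralE //;
  apply: ereal_sup_le => _ [h hle <-]; exists h => //= x;
  apply: le_trans (hle x) _; rewrite !patch_setT.
- by apply: (@funepos_le _ _ setT) => [y _|]; [exact: FG | rewrite in_setT].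
- by apply: (@funeneg_le _ _ setT) => [y _|]; [exact: FG | rewrite in_setT].
Qed.

Lemma density_integrable (h : T -> R) : measurable_fun setT h ->
  (forall x, 0 <= h x) -> (\int[mu]_x (h x)%:E = 1)%E ->
  mu.-integrable setT (EFin \o h).
Proof.
move=> mh h0 h1; apply/integrableP; split; first exact/measurable_realfun.measurable_EFinP.
rewrite (eq_integral (fun x => (h x)%:E)); first by rewrite h1 ltry.
by move=> x _ /=; rewrite ger0_norm.
Qed.

Lemma dominated_integrable (h l : T -> R) : measurable_fun setT h ->
  (forall x, 0 <= h x <= l x) -> mu.-integrable setT (EFin \o l) ->
  mu.-integrable setT (EFin \o h).
Proof.
move=> mh hl il; apply: le_integrable il => //; first exact/measurable_realfun.measurable_EFinP.
move=> x _ /=; have /andP[h0 hlx] := hl x.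
by rewrite !ger0_norm ?lee_fin // (le_trans h0).
Qed.

Lemma integral_lin3 (a1 a2 a3 v1 v2 v3 : R) (h1 h2 h3 : T -> R) :
  mu.-integrable setT (EFin \o h1) -> mu.-integrable setT (EFin \o h2) ->
  mu.-integrable setT (EFin \o h3) ->
  (\int[mu]_x (h1 x)%:E = v1%:E)%E -> (\int[mu]_x (h2 x)%:E = v2%:E)%E ->
  (\int[mu]_x (h3 x)%:E = v3%:E)%E ->
  (\int[mu]_x (a1 * h1 x + a2 * h2 x + a3 * h3 x)%:E =
    (a1 * v1 + a2 * v2 + a3 * v3)%:E)%E.
Proof.
move=> i1 i2 i3 e1 e2 e3; under eq_integral do rewrite !EFinD !EFinM.
have j1 : mu.-integrable setT (fun x => a1%:E * (h1 x)%:E)%E by exact: integrableZl.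
have j2 : mu.-integrable setT (fun x => a2%:E * (h2 x)%:E)%E by exact: integrableZl.
have j3 : mu.-integrable setT (fun x => a3%:E * (h3 x)%:E)%E by exact: integrableZl.
rewrite integralD //; last exact: integrableD.
by rewrite integralD // !integralZl // e1 e2 e3 -!EFinM -!EFinD.
Qed.

Variables (p q : T -> R).
Hypotheses (mp : measurable_fun setT p) (mq : measurable_fun setT q).
Hypotheses (p0 : forall x, 0 <= p x) (q0 : forall x, 0 <= q x).
Hypotheses (ip1 : (\int[mu]_x (p x)%:E = 1)%E) (iq1 : (\int[mu]_x (q x)%:E = 1)%E).

Lemma measurable_min_density k :
  measurable_fun setT (fun x => Num.min (q x) (k * p x)).
Proof.
apply: measurable_realfun.measurable_minr => //.
by apply: measurable_realfun.measurable_funM => //; exact: measurable_cst.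
Qed.

Section MinDensity.
Variable k : R.
Hypothesis k0 : 0 <= k.

Let min_density_bounds x : 0 <= Num.min (q x) (k * p x) <= q x.
Proof. by rewrite ge_min lexx orTb andbT le_min q0 mulr_ge0. Qed.

Lemma min_density_integrable :
  mu.-integrable setT (EFin \o (fun x => Num.min (q x) (k * p x))).
Proof.
exact: dominated_integrable (measurable_min_density k) min_density_bounds
  (density_integrable mq q0 iq1).
Qed.

Lemma integral_min_density_ge0 :
  (0 <= \int[mu]_x (Num.min (q x) (k * p x))%:E)%E.
Proof.
by apply: integral_ge0 => x _; rewrite lee_fin; case/andP: (min_density_bounds x).
Qed.

Lemma integral_min_density_le1 :
  (\int[mu]_x (Num.min (q x) (k * p x))%:E <= 1)%E.
Proof.
rewrite -iq1; apply: lee_integral => x.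
by rewrite lee_fin; case/andP: (min_density_bounds x).
Qed.

End MinDensity.

Section FdivBound.
Variables (f : R -> R) (k m : R).
Hypotheses (cf : convex_pos f) (k0 : 0 < k).
Hypothesis integral_minE : (\int[mu]_x (Num.min (q x) (k * p x))%:E = m%:E)%E.

Let m01 : 0 <= m <= 1.
Proof.
rewrite -!lee_fin -integral_minE.
by rewrite integral_min_density_ge0 ?integral_min_density_le1 ?ltW.
Qed.

Let n_gt0 : 0 < 1 + k - m.
Proof. by case/andP: m01 => _ m1; have := k0; lra. Qed.

Lemma fdiv_ge_affine_minorant (M s1 : R) :
  (forall r, 0 < r -> M + s1 * (r - m) <= persp f r) ->
  ((M + (persp f (1 + k - m) - persp f k))%:E <= fdiv f mu p q)%E.
Proof.
move=> persp_m.
have [s2 persp_n] := convex_pos_subgradient (convex_pos_persp cf) n_gt0.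
have := two_piece_minorant k0 persp_m persp_n.
set C := M - s1 * m + _ - _ - _ => persp_ge.
apply: le_trans (lee_integral (fun x =>
  fdiv_integrand_ge_minorant cf k0 persp_ge (p0 x) (q0 x))).
have -> : (fun x => (C * p x + s1 * Num.min (q x) (k * p x)
    + s2 * (q x - Num.min (q x) (k * p x)))%:E) =
  (fun x => (C * p x + (s1 - s2) * Num.min (q x) (k * p x) + s2 * q x)%:E).
  by apply/funext => x; congr EFin; ring.
rewrite (integral_lin3 _ _ _ (density_integrable mp p0 ip1)
  (min_density_integrable (ltW k0)) (density_integrable mq q0 iq1) ip1
  integral_minE iq1).
suff -> : C * 1 + (s1 - s2) * m + s2 * 1 = M + (persp f (1 + k - m) - persp f k) by [].
by rewrite /C; ring.
Qed.

Lemma fdiv_ge_fstar :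
  (fstar f (1 + k - m) + fstar f m - fstar f k <= fdiv f mu p q)%E.
Proof.
rewrite (fstar_gt0 _ n_gt0) (fstar_gt0 _ k0) [(_%:E + _)%E]addeC -addeA -EFinB.
apply: lee_add_approx => M M_lt.
suff [s1 persp_m] : exists s1, forall r, 0 < r -> M + s1 * (r - m) <= persp f r.
  exact: fdiv_ge_affine_minorant persp_m.
have [m_gt0|m_le0] := ltP 0 m.
- move: M_lt; rewrite fstar_gt0 // lte_fin => M_lt.
  have [s1 persp_m] := convex_pos_subgradient (convex_pos_persp cf) m_gt0.
  by exists s1 => r r0; have := persp_m r r0; lra.
- have m_eq0 : m = 0 by apply/eqP; rewrite eq_le m_le0; case/andP: m01.
  move: M_lt; rewrite /fstar m_eq0 ltxx => M_lt.
  have [s1 persp_0] := convex_pos_affine_minorant_at0 (convex_pos_persp cf) M_lt.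
  by exists s1 => r r0; rewrite subr0; exact: persp_0.
Qed.

End FdivBound.

Lemma integral_min_scale (a c : R) : 0 <= a -> 0 < c ->
  (\int[mu]_x (Num.min (a * p x) (c * q x))%:E =
   c%:E * \int[mu]_x (Num.min (q x) (a / c * p x))%:E)%E.
Proof.
move=> a0 c0; rewrite -ge0_integralZl ?lee_fin ?ltW //.
- apply: eq_integral => x _; rewrite -EFinM minr_pMr ?ltW // mulrA.
  by rewrite [c * (a / c)]mulrC divfK ?gt_eqF // minC.
- by apply/measurable_realfun.measurable_EFinP; exact: measurable_min_density.
- by move=> x _; rewrite lee_fin le_min q0 mulr_ge0 // divr_ge0 // ltW.
Qed.

Lemma fine_degroot (w : R) : 0 < w < 1 ->
  fine (degroot mu p q w) =
  Num.min w (1 - w) - fine (\int[mu]_x (Num.min (w * p x) ((1 - w) * q x))%:E).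
Proof.
move=> w01; have /andP[w0 w1] := w01.
have integrable_min : mu.-integrable setT
    (EFin \o (fun x => Num.min (w * p x) ((1 - w) * q x))).
  apply: dominated_integrable (density_integrable mq q0 iq1).
    apply: measurable_realfun.measurable_minr;
    by apply: measurable_realfun.measurable_funM => //; exact: measurable_cst.
  have w_ge0 : 0 <= w by exact: ltW.
  have w1_ge0 : 0 <= 1 - w by rewrite subr_ge0 ltW.
  have w1_le1 : 1 - w <= 1 by rewrite lerBlDr lerDl ltW.
  by move=> x; rewrite le_min !mulr_ge0 // ge_min ler_piMl ?q0 ?orbT.
have fin : (\int[mu]_x (Num.min (w * p x) ((1 - w) * q x))%:E)%E \is a fin_num.
  exact: integrable_fin_num integrable_min.
rewrite /degroot /fdiv (eq_integral (fun x => (Num.min w (1 - w))%:E * (q x)%:E -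
    (Num.min (w * p x) ((1 - w) * q x))%:E)%E); last first.
  by move=> x _; rewrite fdiv_integrand_phi // EFinB EFinM.
have iq : mu.-integrable setT (EFin \o q) := density_integrable mq q0 iq1.
rewrite integralB //; last exact: integrableZl.
by rewrite integralZl // iq1 mule1 -(fineK fin).
Qed.

Lemma fdiv_ge_fstar_min (f : R -> R) (a c I : R) : convex_pos f -> 0 < a -> 0 < c ->
  I = a - fine (\int[mu]_x (Num.min (a * p x) (c * q x))%:E) ->
  (fstar f (1 + I / c) + fstar f ((a - I) / c) - fstar f (a / c)
     <= fdiv f mu p q)%E.
Proof.
move=> cf a0 c0 ->.
have k0 : 0 < a / c by rewrite divr_gt0.
have fin : (\int[mu]_x (Num.min (q x) (a / c * p x))%:E)%E \is a fin_num.
  exact/integrable_fin_num/min_density_integrable/ltW.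
set m := fine (\int[mu]_x (Num.min (q x) (a / c * p x))%:E).
have -> : fine (\int[mu]_x (Num.min (a * p x) (c * q x))%:E) = c * m.
  by rewrite integral_min_scale ?ltW // -(fineK fin).
have -> : 1 + (a - c * m) / c = 1 + a / c - m by field; rewrite gt_eqF.
have -> : (a - (a - c * m)) / c = m by field; rewrite gt_eqF.
exact: fdiv_ge_fstar cf k0 (esym (fineK fin)).
Qed.

End Density.

Theorem corollary4 (R : realType) (d : measure_display) (T : measurableType d)
  (f : R -> R) (P Q : probability T R) (mu : {measure set T -> \bar R})
  (p q : T -> R) :
  in_C f ->
  measurable_fun setT p -> measurable_fun setT q ->
  (forall x, 0 <= p x) -> (forall x, 0 <= q x) ->
  (forall A, measurable A -> P A = (\int[mu]_(x in A) (p x)%:E)%E) ->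
  (forall A, measurable A -> Q A = (\int[mu]_(x in A) (q x)%:E)%E) ->
  (forall w : R, 0 < w <= 1 / 2 ->
     let I := fine (degroot mu p q w) in
     (fstar f (1 + I / (1 - w)) + fstar f ((w - I) / (1 - w))
        - fstar f (w / (1 - w)) <= fdiv f mu p q)%E) /\
  (forall w : R, 1 / 2 < w < 1 ->
     let I := fine (degroot mu q p w) in
     (fstar f (1 + I / w) + fstar f ((1 - w - I) / w)
        - fstar f ((1 - w) / w) <= fdiv f mu p q)%E).
Proof.
move=> [cf _] mp mq p0 q0 P_density Q_density.
have ip1 : (\int[mu]_x (p x)%:E = 1)%E by rewrite -P_density // probability_setT.
have iq1 : (\int[mu]_x (q x)%:E = 1)%E by rewrite -Q_density // probability_setT.
split=> w /andP[w_gt w_lt].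
- have w1 : 0 < 1 - w by lra.
  have w01 : 0 < w < 1 by rewrite w_gt; lra.
  apply: fdiv_ge_fstar_min => //.
  by rewrite (fine_degroot mp mq p0 q0 iq1 w01) min_l //; lra.
- have w0 : 0 < w by lra.
  have w01 : 0 < w < 1 by rewrite w0.
  apply: fdiv_ge_fstar_min => //; first by rewrite subr_gt0.
  rewrite (fine_degroot mq mp q0 p0 ip1 w01) min_r; last lra.
  by under eq_integral do rewrite minC.
Qed.
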